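(* In the setting described in the context, assume A1, A2 and A3. If there exists $k^\star\in\{1,\dots,K\}$ with $\inf_{\mathbf w\in\mathcal W^*}w_{k^\star}>\frac12$, then $\liminf_{n\to\infty}\Pr\big(Y\in\mathcal C_{\mathrm{comb}}(\mathbf X;\mathcal D_n)\big)\ge1-\alpha$.
   Context: Setting: fix $K\ge2$ and $\alpha\in(0,1)$. For each sample size $n$, on a common probability space there are a random data set $\mathcal D_n$ and a random test pair $(\mathbf X,Y)$ with $\mathbf X\in\mathcal X\subseteq\mathbb R^p$, $Y\in\mathbb R$. For each $k\in\{1,\dots,K\}$ there is a random prediction set $\mathcal C_k(\mathbf X;\mathcal D_n)\subseteq\mathbb R$, determined by $\mathcal D_n$ and $\mathbf X$, such that the events $\{Y\in\mathcal C_k(\mathbf X;\mathcal D_n)\}$ are measurable. Let $\Delta^{K-1}=\{\mathbf w\in[0,1]^K:w_k\ge0,\sum_k w_k=1\}$ and let $\widehat{\mathbf w}_n=(\widehat w_{n,1},\dots,\widehat w_{n,K})$ be a $\sigma(\mathcal D_n)$-measurable random vector in $\Delta^{K-1}$. Let $\mathcal W^*\subseteq\Delta^{K-1}$ be a nonempty closed convex set; $\|\cdot\|$ is the Euclidean norm. A1: for every $n$ and every $k$, $\Pr(Y\notin\mathcal C_k(\mathbf X;\mathcal D_n)\mid\mathcal D_n)\le\alpha$ almost surely. A2: $\inf_{\mathbf w\in\mathcal W^*}\|\widehat{\mathbf w}_n-\mathbf w\|\to0$ in probability as $n\to\infty$. A3: $\mathcal C_{\mathrm{comb}}(\mathbf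 X;\mathcal D_n):=\{y\in\mathbb R:\sum_{k=1}^K\widehat w_{n,k}\mathbf 1\{y\in\mathcal C_k(\mathbf X;\mathcal D_n)\}>1/2\}$. *)

From HB Require Import structures.
From mathcomp Require Import all_boot all_order all_algebra.
From mathcomp Require Import all_classical all_reals all_analysis.
Set Implicit Arguments. Unset Strict Implicit. Unset Printing Implicit Defensive.
Import Order.TTheory GRing.Theory Num.Theory.
Local Open Scope classical_set_scope.
Local Open Scope ring_scope.

Definition sigma_of {d d' : measure_display} {Omega : measurableType d}
  {T : measurableType d'} (f : Omega -> T) : set (set Omega) :=
  [set f @^-1` A | A in [set A : set T | measurable A]].

Definition G_measurable {d : measure_display} {Omega : measurableType d}
  {R : realType} (G : set (set Omega)) (g : Omega -> R) : Prop :=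
  forall B : set R, measurable B -> G (g @^-1` B).

(* "Pr(A | G) <= a almost surely": some version g of the conditional
   probability of A given the sigma-algebra G (i.e. g is G-measurable and
   P(A ∩ B) = ∫_B g dP for every B in G) satisfies g <= a P-a.s. *)
Definition cond_prob_le {d : measure_display} {Omega : measurableType d}
  {R : realType} (P : probability Omega R) (G : set (set Omega))
  (A : set Omega) (a : R) : Prop :=
  exists g : Omega -> R,
    [/\ G_measurable G g,
        (forall B, G B -> P (A `&` B) = (\int[P]_(x in B) (g x)%:E)%E)
      & {ae P, forall x, g x <= a}].

Definition eucl_norm {R : realType} {K : nat} (v : 'rV[R]_K) : R :=
  Num.sqrt (\sum_(i < K) (v 0 i) ^+ 2).

Definition dist_set {R : realType} {K : nat} (w : 'rV[R]_K) (W : set 'rV[R]_K) : R :=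
  inf [set eucl_norm (w - v) | v in W].

Definition simplex (R : realType) (K : nat) : set 'rV[R]_K :=
  [set w | (forall k, 0 <= w 0 k) /\ \sum_(k < K) w 0 k = 1].

Definition convex_set_rV {R : realType} {K : nat} (W : set 'rV[R]_K) : Prop :=
  forall u v (t : R), W u -> W v -> 0 <= t -> t <= 1 ->
    W (t *: u + (1 - t) *: v).

Definition comb_set {R : realType} {K : nat} (w : 'rV[R]_K)
  (C : 'I_K -> set R) : set R :=
  [set y | 2^-1 < \sum_(k < K) w 0 k * \1_(C k) y].
Arguments simplex R K : clear implicits.

From HB Require Import structures.
From mathcomp Require Import all_boot all_order all_algebra.
From mathcomp Require Import all_classical all_reals all_analysis.
From mathcomp Require Import lra.
Import Order.TTheory GRing.Theory Num.Theory numFieldNormedType.Exports.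
Local Open Scope classical_set_scope.
Local Open Scope ring_scope.
Set Implicit Arguments. Unset Strict Implicit.

(* Let k be such that eps := inf_{W*} w_k - 1/2 is positive.  When the
   estimated weight of k exceeds 1/2, the weighted majority vote contains C_k;
   when it does not, the estimated weights are at distance at least eps from W*.
   Hence Pr(Y in C_comb) >= 1 - Pr(Y notin C_k) - Pr(dist(w_n, W* ) >= eps), where
   Pr(Y notin C_k) <= alpha by integrating A1, and the last term vanishes by A2.
   The one technical point is that the event dist(w_n, W* ) >= eps is measurable:
   the weights at distance < eps from W* form an open set, and the preimage of an
   open subset of R^K is a countable union of preimages of rational boxes. *)

Section euclidean_distance.
Context {R : realType} {K : nat}.
Implicit Types (x v : 'rV[R]_K) (W : set 'rV[R]_K).

Lemma eucl_norm_ge0 x : 0 <= eucl_norm x.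
Proof. exact: sqrtr_ge0. Qed.

Lemma coord_le_eucl_norm x k : `|x 0 k| <= eucl_norm x.
Proof.
rewrite /eucl_norm -sqrtr_sqr; apply: ler_wsqrtr.
by rewrite (bigD1 k) //= lerDl; apply: sumr_ge0 => i _; exact: sqr_ge0.
Qed.

Lemma eucl_norm_continuous : continuous (@eucl_norm R K).
Proof.
move=> x; apply: continuous_comp; last exact: sqrt_continuous.
apply: (@continuous_big _ _ +%R 0 xpredT add_continuous) => k _ y.
exact: continuousM (@coord_continuous _ _ _ 0 k y) (@coord_continuous _ _ _ 0 k y).
Qed.

Lemma dist_set_le W x v : W v -> dist_set x W <= eucl_norm (x - v).
Proof.
move=> Wv; apply: ge_inf; last by exists v.
by exists 0 => _ [u _ <-]; exact: eucl_norm_ge0.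
Qed.

Lemma dist_set_lt W x e : W !=set0 ->
  dist_set x W < e -> exists2 v, W v & eucl_norm (x - v) < e.
Proof.
move=> [v0 Wv0] /inf_lt[|_ [v Wv <-] lt_e]; last by exists v.
by exists (eucl_norm (x - v0)), v0.
Qed.

Lemma inf_coord_sub_le_dist_set W x k : W !=set0 ->
  has_lbound [set v 0 k | v in W] -> inf [set v 0 k | v in W] - x 0 k <= dist_set x W.
Proof.
move=> [v0 Wv0] Wk; apply: lb_le_inf; first by exists (eucl_norm (x - v0)), v0.
move=> _ [v Wv <-]; apply: le_trans (coord_le_eucl_norm _ k).
rewrite !mxE -normrN opprB; apply: le_trans (ler_norm _).
by rewrite lerD2r; apply: ge_inf => //; exists v.
Qed.

Lemma open_dist_set_lt W e : W !=set0 -> open [set x | dist_set x W < e].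
Proof.
move=> W0.
have -> : [set x | dist_set x W < e] =
    \bigcup_(v in W) ((fun x => eucl_norm (x - v)) @^-1` `]-oo, e[).
  apply/seteqP; split => [x /(dist_set_lt W0)[v Wv lt_e]|x [v Wv /=]].
    by exists v => //=; rewrite in_itv.
  by rewrite in_itv /= => /(le_lt_trans (dist_set_le _ Wv)).
apply: bigcup_open => v _; apply: (continuousP _).1; last exact: interval_open.
move=> x; apply: continuous_comp; last exact: eucl_norm_continuous.
by apply: continuousB => //; exact: cst_continuous.
Qed.

End euclidean_distance.

Section rV_measurability.
Context {R : realType} {K : nat}.

Definition rat_box (b : {ffun 'I_K -> rat * rat}) : set 'rV[R]_K :=
  [set y | forall k, ratr (b k).1 < y 0 k < ratr (b k).2].

Lemma rat_box_in_ball (x : 'rV[R]_K) e : 0 < e ->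
  exists b, rat_box b x /\ rat_box b `<=` ball x e.
Proof.
move=> e0.
have qk k : exists q : rat * rat,
    x 0 k - e < ratr q.1 < x 0 k /\ x 0 k < ratr q.2 < x 0 k + e.
  have [q1] : exists q : rat, ratr q \in `](x 0 k - e), (x 0 k)[.
    by apply: rat_in_itvoo; lra.
  have [q2] : exists q : rat, ratr q \in `](x 0 k), (x 0 k + e)[.
    by apply: rat_in_itvoo; lra.
  by rewrite !in_itv /= => ? ?; exists (q1, q2).
have [q hq] := choice qk.
exists [ffun k => q k]; split=> [k|y yb]; rewrite ?ffunE.
  by have [/andP[_ ->] /andP[-> _]] := hq k.
(* balls of 'rV[R]_K are products of coordinate balls (sup norm) *)
split=> // i k; rewrite [i]ord1 /ball /= ltr_norml.
have := yb k; rewrite ffunE; have [/andP[? ?] /andP[? ?]] := hq k.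
move=> /andP[? ?]; apply/andP; split; lra.
Qed.

Context {d : measure_display} {Omega : measurableType d} (f : Omega -> 'rV[R]_K).
Hypothesis mf : forall k, measurable_fun setT (fun w => f w 0 k).

Lemma measurable_preimage_rat_box b : measurable (f @^-1` rat_box b).
Proof.
have -> : f @^-1` rat_box b =
    \bigcap_(k in [set: 'I_K]) ((fun w => f w 0 k) @^-1` `]ratr (b k).1, ratr (b k).2[).
  apply/seteqP; split => w /= wb k; last by have := wb k I; rewrite /= in_itv.
  by move=> _ /=; rewrite in_itv; exact: wb.
apply: fin_bigcap_measurable; first exact: finite_finset.
by move=> k _; rewrite -[X in measurable X]setTI; apply: mf.
Qed.

Lemma measurable_preimage_open (U : set 'rV[R]_K) : open U -> measurable (f @^-1` U).
Proof.
move=> oU.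
have -> : f @^-1` U = \bigcup_(b in [set b | rat_box b `<=` U]) f @^-1` rat_box b.
  apply/seteqP; split => [w /= Ufw|w [b /= bU /bU //]].
  have [e e0 eU] := (nbhs_ballP _ _).1 (open_nbhs_nbhs (conj oU Ufw)).
  by have [b [bfw /subset_trans/(_ eU)]] := rat_box_in_ball (f w) e0; exists b.
rewrite bigcup_mkcond; apply: countable_bigcupT_measurable; first exact: countableP.
by move=> b; case: ifP => _; [exact: measurable_preimage_rat_box|exact: measurable0].
Qed.

Lemma measurable_coord_gt k c : measurable [set w | c < f w 0 k].
Proof.
rewrite (_ : [set w | _] = (fun w => f w 0 k) @^-1` `]c, +oo[).
  by rewrite -[X in measurable X]setTI; exact: mf.
by apply/seteqP; split => w /=; rewrite in_itv /= andbT.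
Qed.

Lemma measurable_dist_set_ge (W : set 'rV[R]_K) e : W !=set0 ->
  measurable [set w | e <= dist_set (f w) W].
Proof.
move=> W0; rewrite (_ : [set w | _] = ~` (f @^-1` [set x | dist_set x W < e])).
  by apply/measurableC/measurable_preimage_open; exact: open_dist_set_lt.
by apply/seteqP; split => w /=; rewrite leNgt => /negP.
Qed.

End rV_measurability.

Lemma cst_sub_null_le_limn_einf (R : realType) (c : R) (u v : (\bar R)^nat) :
  (forall n, c%:E - v n <= u n)%E -> v @ \oo --> 0%E -> (c%:E <= limn_einf u)%E.
Proof.
move=> cvu v0.
have cv : (fun n => c%:E - v n)%E @ \oo --> c%:E.
  by rewrite -[X in _ --> X]sube0; apply: cvgeB => //; exact: cvg_cst.
rewrite -(cvg_limn_einf_sup cv).1 !limn_einf_lim.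
apply: lee_lim; [exact: is_cvg_einfs|exact: is_cvg_einfs|].
apply: nearW => n; apply: le_ereal_inf_tmp => _ [m /= nm <-].
by apply: le_trans (cvu m); apply: ereal_inf_lbound; exists m.
Qed.

Section sigma_of_measurable.
Context {d dD : measure_display} {Omega : measurableType d} {T : measurableType dD}.
Variable D : Omega -> T.
Hypothesis mD : measurable_fun setT D.

Lemma sigma_of_setT : sigma_of D setT.
Proof. by exists setT; [exact: measurableT|exact: preimage_setT]. Qed.

Lemma sigma_of_measurable B : sigma_of D B -> measurable B.
Proof. by move=> [A mA <-]; rewrite -[X in measurable X]setTI; exact: mD. Qed.

End sigma_of_measurable.

Lemma G_measurable_measurable_fun {d : measure_display} {Omega : measurableType d}
    {R : realType} (G : set (set Omega)) (g : Omega -> R) :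
  (forall B, G B -> measurable B) -> G_measurable G g -> measurable_fun setT g.
Proof. by move=> GB gG _ B mB; rewrite setTI; exact/GB/gG. Qed.

Lemma cond_prob_le_probability {d : measure_display} {Omega : measurableType d}
    {R : realType} (P : probability Omega R) (G : set (set Omega)) A (a : R) :
  G setT -> (forall B, G B -> measurable B) -> 0 <= a ->
  cond_prob_le P G A a -> (P A <= a%:E)%E.
Proof.
move=> GT GB a0 [g [gG PAg ga]].
have mg := G_measurable_measurable_fun GB gG.
(* P A = \int g <= \int g^+ <= a, using g <= a a.e. and 0 <= a *)
rewrite -[A]setIT PAg // integralE.
apply: le_trans (leeB (lexx _) (integral_ge0 _ _)) _ => //.
rewrite sube0; apply: le_trans (_ : \int[P]_(x in setT) (cst a%:E x) <= _)%E.
  apply: ae_ge0_le_integral => //.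
  - by apply: measurable_realfun.measurable_funepos; exact/measurable_realfun.measurable_EFinP.
  - apply: filterS ga => x gx _.
    by rewrite funeposE /= ge_max; apply/andP; split; rewrite lee_fin.
by rewrite integral_cst // [X in (_ * X)%E]probability_setT mule1.
Qed.

Lemma probability_setI_ge {d : measure_display} {Omega : measurableType d}
    {R : realType} (P : probability Omega R) (A B : set Omega) :
  measurable A -> measurable B -> (1 - (P (~` A) + P (~` B)) <= P (A `&` B))%E.
Proof.
move=> mA mB.
have mCAB : measurable (~` (A `&` B)) by apply: measurableC; exact: measurableI.
rewrite -[A `&` B]setCK (probability_setC P mCAB) setCI.
by apply: leeB => //; apply: measureU2; exact: measurableC.
Qed.

Lemma comb_set_majority (R : realType) (K : nat) (w : 'rV[R]_K) (C : 'I_K -> set R) k y :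
  (forall i, 0 <= w 0 i) -> C k y -> 2^-1 < w 0 k -> comb_set w C y.
Proof.
move=> w0 Cky wk; rewrite /comb_set /= (bigD1 k) //= indicE mem_set // mulr1.
apply: lt_le_trans wk _; rewrite lerDl; apply: sumr_ge0 => i _.
by rewrite mulr_ge0 ?indicE.
Qed.

Lemma measurable_comb_set {d : measure_display} {Omega : measurableType d}
    {R : realType} {K : nat} (w : Omega -> 'rV[R]_K) (C : Omega -> 'I_K -> set R)
    (y : Omega -> R) :
  (forall k, measurable_fun setT (fun o => w o 0 k)) ->
  (forall k, measurable [set o | C o k (y o)]) ->
  measurable [set o | comb_set (w o) (C o) (y o)].
Proof.
move=> mw mC.
have -> : [set o | comb_set (w o) (C o) (y o)] =
    (fun o => \sum_(k < K) w o 0 k * \1_[set o | C o k (y o)] o) @^-1` `]2^-1, +oo[.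
  by apply/seteqP; split => o /=; rewrite in_itv /= andbT.
rewrite -[X in measurable X]setTI; apply: measurable_sum => // k.
by apply: measurable_realfun.measurable_funM => //; exact: measurable_indic.
Qed.

Theorem theorem2
  (R : realType) (K p : nat) (alpha : R)
  (d : measure_display) (Omega : measurableType d) (P : probability Omega R)
  (dD : measure_display) (TD : nat -> measurableType dD)
  (D : forall n, Omega -> TD n)
  (X : nat -> Omega -> 'rV[R]_p) (Y : nat -> Omega -> R)
  (C : forall n, 'I_K -> TD n -> 'rV[R]_p -> set R)
  (what : nat -> Omega -> 'rV[R]_K)
  (Wstar : set 'rV[R]_K) :
  (2 <= K)%N -> 0 < alpha < 1 ->
  (forall n, measurable_fun setT (D n)) ->
  (forall n, measurable_fun setT (Y n)) ->
  (forall n k, measurable [set w | C n k (D n w) (X n w) (Y n w)]) ->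
  (forall n w, simplex R K (what n w)) ->
  (forall n k, G_measurable (sigma_of (D n)) (fun w => what n w 0 k)) ->
  Wstar !=set0 -> closed Wstar -> convex_set_rV Wstar -> Wstar `<=` simplex R K ->
  (* A1 *)
  (forall n k, cond_prob_le P (sigma_of (D n))
                 [set w | ~ C n k (D n w) (X n w) (Y n w)] alpha) ->
  (* A2 *)
  (forall eps : R, 0 < eps ->
     (fun n => P [set w | eps <= dist_set (what n w) Wstar]) @ \oo --> 0%E) ->
  (exists kstar : 'I_K, 2^-1 < inf [set v 0 kstar | v in Wstar]) ->
  ((1 - alpha)%:E <=
     limn_einf (fun n => P [set w |
        comb_set (what n w) (fun k => C n k (D n w) (X n w)) (Y n w)]))%E.
Proof.
move=> _ /andP[alpha0 _] mD _ mC what_simplex whatG W0 _ _ W_simplex A1 A2 [ks].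
set m := inf [set v 0 ks | v in Wstar] => half_lt_m.
have W_lbound : has_lbound [set v 0 ks | v in Wstar].
  by exists 0 => _ [v Wv <-]; exact: (W_simplex v Wv).1.
apply: (cst_sub_null_le_limn_einf _ (A2 (m - 2^-1) _)); last by rewrite subr_gt0.
move=> n; set Cn := [set w | C n ks (D n w) (X n w) (Y n w)].
set Hn := [set w | 2^-1 < what n w 0 ks].
set Sn := [set w | m - 2^-1 <= dist_set (what n w) Wstar].
have mwhat k : measurable_fun setT (fun w => what n w 0 k).
  exact: G_measurable_measurable_fun (sigma_of_measurable (mD n)) (whatG n k).
have mHn : measurable Hn := measurable_coord_gt mwhat ks 2^-1.
have PCn : (P (~` Cn) <= alpha%:E)%E.
  apply: cond_prob_le_probability (A1 n ks); last exact: ltW.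
    exact: sigma_of_setT.
  exact: sigma_of_measurable.
have PHn : (P (~` Hn) <= P Sn)%E.
  apply: le_measure; rewrite ?inE; [exact: measurableC|exact: measurable_dist_set_ge|].
  move=> w; rewrite /Hn /Sn /= => /negP; rewrite -leNgt => far.
  by apply: le_trans (inf_coord_sub_le_dist_set _ W0 W_lbound); rewrite lerD2l lerN2.
apply: le_trans (le_trans (probability_setI_ge P (mC n ks) mHn) (le_measure _ _ _ _)).
- by rewrite EFinB -addeA -oppeD // leeB // leeD.
- by rewrite inE; exact: measurableI.
- by rewrite inE; apply: measurable_comb_set => // k; exact: mC.
- by move=> w [Cw Hw]; apply: comb_set_majority Cw Hw; exact: (what_simplex n w).1.
Qed.
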